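(* Let $\Gamma=(G,\sigma)$ be a signed graph with girth $g$ and let $C_g^\sigma$ be a shortest cycle of $\Gamma$. If $i_-(\Gamma)=i_-(C_g^\sigma)$, then $N_r(C_g^\sigma)=\emptyset$ for every integer $r\ge 2$.
   Context: A signed graph $\Gamma=(G,\sigma)$ is a simple graph $G$ with a sign function $\sigma:E(G)\to\{+,-\}$. Its adjacency matrix $A(\Gamma)$ has $(u,v)$-entry $\sigma(uv)$ if $uv\in E(G)$ and $0$ otherwise; $i_+(\Gamma)$, $i_-(\Gamma)$, $\eta(\Gamma)$ denote the numbers of positive, negative and zero eigenvalues of $A(\Gamma)$. A cycle $C_g^\sigma$ of $\Gamma$ is regarded as a signed graph with the restricted signs. The girth $g$ is the length of a shortest cycle. For a cycle $C$ of $\Gamma$ and a positive integer $r$, $N_r(C)$ denotes the set of vertices $v\in V(\Gamma)\setminus V(C)$ whose distance to $V(C)$ (the minimum over $x\in V(C)$ of the length of a shortest $v$–$x$ path) equals $r$. *)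

From HB Require Import structures.
From mathcomp Require Import all_boot all_order all_algebra all_field.
Set Implicit Arguments. Unset Strict Implicit. Unset Printing Implicit Defensive.
Import Order.TTheory GRing.Theory Num.Theory.
Local Open Scope ring_scope.

(* A signed graph on the finite vertex type T: a simple graph given by a
   symmetric irreflexive relation [e], together with a sign function [neg]
   ([neg x y = true] means the edge xy is negative), symmetric. *)
Definition signed_graph (T : finType) (e : rel T) (neg : T -> T -> bool) : Prop :=
  symmetric e /\ irreflexive e /\ (forall x y, neg x y = neg y x).

Definition sgn_val (T : finType) (neg : T -> T -> bool) (x y : T) : algC :=
  if neg x y then -1 else 1.

Definition adj_mx (T : finType) (e : rel T) (neg : T -> T -> bool)
  : 'M[algC]_#|T| :=
  \matrix_(i, j) (if e (enum_val i) (enum_val j)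
                  then sgn_val neg (enum_val i) (enum_val j) else 0).

(* The multiset of eigenvalues (roots of the characteristic polynomial,
   with multiplicity) of a square complex matrix. *)
Definition eigenvalues (m : nat) (M : 'M[algC]_m) : seq algC :=
  sval (closed_field_poly_normal (char_poly M)).

Definition n_neg (m : nat) (M : 'M[algC]_m) : nat :=
  count (fun z : algC => z < 0) (eigenvalues M).

Definition is_cycle (T : finType) (e : rel T) (c : seq T) : Prop :=
  [/\ uniq c, 3 <= size c & cycle e c]%N.

(* The cycle c regarded as a signed graph (its own vertices, its own edges,
   restricted signs): adjacency matrix indexed by positions on the cycle. *)
Definition cycle_adj_mx (T : finType) (neg : T -> T -> bool) (c : seq T)
  : 'M[algC]_(size c) :=
  \matrix_(i, j)
    (if (val j == (val i).+1 %% size c)%N || (val i == (val j).+1 %% size c)%N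
     then sgn_val neg (tnth (in_tuple c) i) (tnth (in_tuple c) j) else 0).

Definition dist_le (T : finType) (e : rel T) (k : nat) (v : T) (S : seq T) : Prop :=
  exists p : seq T, [/\ path e v p, (size p <= k)%N & last v p \in S].

Definition in_N (T : finType) (e : rel T) (r : nat) (c : seq T) (v : T) : Prop :=
  [/\ v \notin c, dist_le e r v c & ~ dist_le e r.-1 v c].

From HB Require Import structures.
From mathcomp Require Import all_boot all_order all_algebra all_field.
From mathcomp Require Import ring.
Set Implicit Arguments. Unset Strict Implicit. Unset Printing Implicit Defensive.

(* A shortest cycle C is chordless, so its signed adjacency matrix is
   the compression of A(Gamma) to V(C), and the Hermitian form of A(Gamma)
   is negative definite on a space of dimension i_-(C) supported on V(C).  A
   vertex x at distance r >= 2 from C has a neighbour w but no neighbour on C;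
   adding a suitable combination of e_w and e_x to that space keeps the form
   negative definite and raises the dimension by one.  By the variational
   description of i_-, i_-(Gamma) > i_-(C). *)

Lemma next_nth_mod (T : eqType) (c : seq T) x0 i : uniq c -> (i < size c)%N ->
  next c (nth x0 c i) = nth x0 c (i.+1 %% size c).
Proof.
move=> uc hi; rewrite next_nth mem_nth // index_uniq //.
case: c uc hi => [//|y q] uc hi /=.
case: (ltngtP i.+1 (size q).+1) => [hlt | hgt | heq].
- by rewrite modn_small //= (set_nth_default x0).
- by rewrite ltnS leqNgt hi in hgt.
- have -> : i = size q by move: heq => [].
  by rewrite modnn /= nth_default.
Qed.

Section ShortestCycle.
Variables (T : finType) (e : rel T).
Hypotheses (esym : symmetric e) (eirr : irreflexive e).

Lemma shortest_cycle_chordless (c : seq T) : is_cycle e c ->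
  (forall c', is_cycle e c' -> (size c <= size c')%N) ->
  forall y z, y \in c -> z \in c -> e y z -> (z == next c y) || (y == next c z).
Proof.
move=> [uc _ hcyc] hmin y z yc zc hyz.
have [i q hrot] := rot_to yc.
have us : uniq (y :: q) by rewrite -hrot rot_uniq.
have cs : cycle e (y :: q) by rewrite -hrot rot_cycle.
have ss : size (y :: q) = size c by rewrite -hrot size_rot.
have zs : z \in y :: q by rewrite -hrot mem_rot.
rewrite -(next_rot i uc) -[next c z](next_rot i uc) hrot.
have zq : z \in q.
  by move: zs; rewrite inE => /orP [/eqP hz|//]; rewrite hz eirr in hyz.
have hk : (index z q < size q)%N by rewrite index_mem.
have hnz := nth_index y zq.
move: (us) => /= /andP [yq uq].
have zy : z != y by apply: contraNneq yq => <-.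
case: (posnP (index z q)) => [k0 | kpos].
  apply/orP; left.
  rewrite -[next_at y y y q]/(next (y :: q) y) next_nth mem_head /= eqxx.
  by rewrite -k0 hnz.
case: (ltngtP (index z q).+1 (size q)) => [hlt | | heq].
- exfalso; set k := index z q in hk hnz kpos hlt.
  (* y, q_0, ..., q_k = z, then the chord back to y: a shorter cycle *)
  have hc' : is_cycle e (y :: take k.+1 q).
    split.
    + rewrite /= take_uniq // andbT.
      by apply: contra yq; apply: mem_take.
    + by rewrite /= size_take hlt.
    + rewrite /= rcons_path (take_nth y hk) last_rcons hnz esym hyz andbT.
      rewrite -hnz -(take_nth y hk).
      apply: take_path.
      by move: cs; rewrite /= rcons_path => /andP [].
  have := hmin _ hc'.
  by rewrite -ss /= size_take hlt ltnS leqNgt hlt.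
- by rewrite ltnNge hk.
- apply/orP; right.
  rewrite -[next_at z y y q]/(next (y :: q) z) next_nth zs /= (eq_sym y z).
  by rewrite (negbTE zy) heq nth_default.
Qed.

Lemma shortest_cycle_adjE (c : seq T) : is_cycle e c ->
  (forall c', is_cycle e c' -> (size c <= size c')%N) ->
  forall i j : 'I_(size c), e (tnth (in_tuple c) i) (tnth (in_tuple c) j) =
    (val j == (val i).+1 %% size c)%N || (val i == (val j).+1 %% size c)%N.
Proof.
move=> hc hmin i j; have [uc hsz3 hcyc] := hc.
have [x0 _] : exists x0 : T, true by exists (tnth (in_tuple c) i).
rewrite !(tnth_nth x0) /=.
have c_gt0 : (0 < size c)%N by apply: leq_trans hsz3.
rewrite -(nth_uniq x0 (ltn_ord j) (ltn_pmod _ c_gt0) uc).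
rewrite -(nth_uniq x0 (ltn_ord i) (ltn_pmod _ c_gt0) uc).
rewrite -!next_nth_mod //; apply/idP/idP.
  by apply: shortest_cycle_chordless => //; apply: mem_nth.
case/orP => /eqP ->; first by apply: next_cycle hcyc _; apply: mem_nth.
by rewrite esym; apply: next_cycle hcyc _; apply: mem_nth.
Qed.

Lemma in_N_far_edge (r : nat) (c : seq T) (x : T) : (2 <= r)%N -> in_N e r c x ->
  (exists w, e x w) /\ (forall y, y \in c -> ~~ e x y).
Proof.
move=> hr [xnc [[|w p] [hp _ hl]] hfar]; first by rewrite /= (negbTE xnc) in hl.
move: hp => /= /andP [hxw _]; split; first by exists w.
have r1 : (1 <= r.-1)%N by rewrite -subn1 subn_gt0.
move=> y yc; apply/negP => hxy; apply: hfar.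
by exists [:: y]; split; rewrite /= ?hxy.
Qed.

End ShortestCycle.

Import Order.TTheory GRing.Theory Num.Theory.
Local Open Scope ring_scope.
Local Open Scope sesquilinear_scope.

Lemma card_set_count (T : finType) (P : pred T) : #|[set i | P i]| = count P (enum T).
Proof. by rewrite cardsE cardE enumT /enum_mem size_filter. Qed.

Lemma char_poly_conj n (A D P : 'M[algC]_n) : P \in unitmx ->
  A = invmx P *m D *m P -> char_poly A = char_poly D.
Proof.
move=> Pu ->; rewrite /char_poly /char_poly_mx.
set Pp := map_mx polyC P; set Pi := map_mx polyC (invmx P).
have PiP : Pi *m Pp = 1%:M by rewrite -map_mxM mulVmx // map_mx1.
have eX : 'X%:M = Pi *m 'X%:M *m Pp :> 'M[{poly algC}]_n.
  by rewrite mul_mx_scalar -scalemxAl PiP scalemx1.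
rewrite !map_mxM -/Pi -/Pp [in LHS]eX -mulmxBl -mulmxBr !det_mulmx mulrAC.
by rewrite -det_mulmx PiP det1 mul1r.
Qed.

Lemma trmxC_mul m n p (M : 'M[algC]_(m, n)) (N : 'M[algC]_(n, p)) :
  (M *m N)^t* = N^t* *m M^t*.
Proof. by rewrite trmx_mul map_mxM. Qed.

Lemma hermsymmx_trmxC n (A : 'M[algC]_n) : A^t* = A -> A \is hermsymmx.
Proof. by move=> h; rewrite qualifE /= expr0 scale1r h. Qed.

Definition hform n (A : 'M[algC]_n) (u v : 'rV[algC]_n) : algC := (u *m A *m v^t*) 0 0.
Definition hquad n (A : 'M[algC]_n) (u : 'rV[algC]_n) : algC := hform A u u.

Definition negdef n k (A : 'M[algC]_n) (W : 'M[algC]_(k, n)) : Prop :=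
  forall u : 'rV_k, u != 0 -> hquad A (u *m W) < 0.

Section HermitianForm.
Variables (n : nat) (A : 'M[algC]_n).

Lemma hformDl u v w : hform A (u + v) w = hform A u w + hform A v w.
Proof. by rewrite /hform !mulmxDl mxE. Qed.

Lemma hformDr u v w : hform A u (v + w) = hform A u v + hform A u w.
Proof. by rewrite /hform linearD /= map_mxD mulmxDr mxE. Qed.

Lemma hformZl a u v : hform A (a *: u) v = a * hform A u v.
Proof. by rewrite /hform -!scalemxAl mxE. Qed.

Lemma hformZr a u v : hform A u (a *: v) = a^* * hform A u v.
Proof. by rewrite /hform linearZ /= map_mxZ -scalemxAr mxE. Qed.

Lemma hformC u v : A^t* = A -> hform A v u = (hform A u v)^*.
Proof.
move=> hA; rewrite /hform.
have -> : v *m A *m u^t* = (u *m A *m v^t*)^t* by rewrite !trmxC_mul trmxCK hA mulmxA.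
by rewrite !mxE.
Qed.

Lemma hform_delta p q : hform A (delta_mx 0 p) (delta_mx 0 q) = A p q.
Proof.
rewrite /hform mxE (bigD1 q) //= big1 ?addr0.
  rewrite !mxE !eqxx /= conjC1 mulr1 (bigD1 p) //= big1 ?addr0.
    by rewrite mxE !eqxx mul1r.
  by move=> i hi; rewrite mxE (negbTE hi) andbF mul0r.
by move=> i hi; rewrite !mxE (negbTE hi) andbF conjC0 mulr0.
Qed.

End HermitianForm.

Section NegativeInertia.
Variables (n : nat) (A : 'M[algC]_n).
Hypothesis hA : A \is hermsymmx.

Let P := spectralmx A.
Let d := spectral_diag A.
Let S := [set i : 'I_n | d 0 i < 0].
Let sel : 'M[algC]_(#|S|, n) := \matrix_(i, j) (j == enum_val i)%:R.

Lemma n_neg_card : n_neg A = #|S|.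
Proof.
have eA := orthomx_spectralP (hermitian_normalmx hA).
have hc : char_poly A = \prod_(i < n) ('X - (d 0 i)%:P).
  rewrite (char_poly_conj (spectral_unit A) eA) char_poly_trig ?diag_mx_is_trig //.
  by apply: eq_bigr => i _; rewrite mxE eqxx mulr1n.
have hp : perm_eq (eigenvalues A) [seq d 0 i | i <- enum 'I_n].
  rewrite /eigenvalues; case: closed_field_poly_normal => r /= hr.
  apply: prod_XsubC_eq; rewrite big_map big_enum /= -hc.
  by rewrite [RHS]hr (monicP (char_poly_monic A)) scale1r.
by rewrite /n_neg (permP hp) count_map card_set_count.
Qed.

Lemma hquad_spectral u :
  hquad A u = \sum_i d 0 i * ((u *m P^t*) 0 i * ((u *m P^t*) 0 i)^*).
Proof.
have eA := orthomx_spectralP (hermitian_normalmx hA).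
rewrite invmx_unitary ?spectral_unitarymx // in eA.
rewrite /hquad /hform {1}eA.
have -> : u *m (P^t* *m diag_mx d *m P) *m u^t* =
          (u *m P^t*) *m diag_mx d *m (u *m P^t*)^t*.
  by rewrite trmxC_mul trmxCK !mulmxA.
rewrite mxE; apply: eq_bigr => i _.
by rewrite mul_mx_diag !mxE; ring.
Qed.

Lemma n_neg_ge_negdef k (W : 'M[algC]_(k, n)) : negdef A W -> (k <= n_neg A)%N.
Proof.
move=> hW; rewrite n_neg_card leqNgt; apply/negP => hlt.
pose K := W *m P^t* *m sel^T.
(* more vectors than negative directions: some u kills them all *)
have : kermx K != 0.
  rewrite -mxrank_eq0 mxrank_ker -lt0n subn_gt0.
  exact: leq_ltn_trans (rank_leq_col K) hlt.
rewrite -nz_row_eq0 => hnz; set u := nz_row (kermx K) in hnz.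
have huK : u *m K = 0 by apply/sub_kermxP; exact: nz_row_sub.
have hq : 0 <= hquad A (u *m W).
  rewrite hquad_spectral; apply: sumr_ge0 => j _.
  set v := u *m W *m P^t*.
  have [hj | hj] := boolP (j \in S).
    have : (u *m K) 0 (enum_rank_in hj j) = 0 by rewrite huK mxE.
    rewrite /K !mulmxA -/v mxE (bigD1 j) //= big1 ?addr0.
      by rewrite !mxE enum_rankK_in // eqxx mulr1 => ->; rewrite mul0r mulr0.
    by move=> l hl; rewrite !mxE enum_rankK_in // (negbTE hl) mulr0.
  apply: mulr_ge0; last exact: mul_conjC_ge0.
  have /mxOverP dR := hermitian_spectral_diag_real hA.
  by move: hj; rewrite inE => hj; rewrite real_leNgt ?real0 ?dR.
by have := hW u hnz; rewrite (le_gtF hq).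
Qed.

Lemma n_neg_negdef : exists W : 'M[algC]_(n_neg A, n), negdef A W.
Proof.
rewrite n_neg_card; exists (sel *m P) => u hu.
have hPP : P *m P^t* = 1%:M by apply/unitarymxP; exact: spectral_unitarymx.
rewrite hquad_spectral !mulmxA -(mulmxA _ P) hPP mulmx1.
have hsel j : (u *m sel) 0 j = \sum_l u 0 l * (j == enum_val l)%:R.
  by rewrite mxE; apply: eq_bigr => l _; rewrite mxE.
have [i hi] := rV0Pn _ hu.
rewrite (bigD1 (enum_val i)) //= -[X in _ < X](addr0 0); apply: ltr_leD.
  have -> : (u *m sel) 0 (enum_val i) = u 0 i.
    rewrite hsel (bigD1 i) //= eqxx mulr1 big1 ?addr0 // => l hl.
    by rewrite eq_sym (inj_eq enum_val_inj) (negbTE hl) mulr0.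
  have := enum_valP i; rewrite inE => hd.
  by rewrite nmulr_rlt0 // mul_conjC_gt0.
rewrite -oppr_ge0 -sumrN; apply: sumr_ge0 => j _; rewrite oppr_ge0.
have [hj | hj] := boolP (j \in S).
  apply: mulr_le0_ge0; last exact: mul_conjC_ge0.
  by move: hj; rewrite inE => /ltW.
have -> : (u *m sel) 0 j = 0.
  rewrite hsel big1 // => l _.
  have : j != enum_val l by apply: contraNneq hj => ->; exact: enum_valP.
  by move/negbTE => ->; rewrite mulr0.
by rewrite mul0r mulr0.
Qed.

End NegativeInertia.

(* The extra vector e_w - s e_x and corrections by e_x of the lifted rows give
   vectors z + a e_w + b e_x, b = -s (<z, e_w>_A + a), on which the form of A
   equals q_B - 2 |a|^2. *)
Lemma negdef_extend n m (A : 'M[algC]_n) (B : 'M[algC]_m) (F : 'M[algC]_(m, n))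
    (w x : 'I_n) (s : algC) k (W : 'M[algC]_(k, m)) :
  A^t* = A -> F *m A *m F^t* = B ->
  F *m A *m (delta_mx 0 x : 'rV[algC]_n)^t* = 0 ->
  A w w = 0 -> A x x = 0 -> A w x = s -> (s = 1 \/ s = -1) ->
  negdef B W -> exists W' : 'M[algC]_(k + 1, n), negdef A W'.
Proof.
move=> hA hB hx hww hxx hwx hs hW.
set ew : 'rV[algC]_n := delta_mx 0 w; set ex : 'rV[algC]_n := delta_mx 0 x.
have hsc : s^* = s by case: hs => ->; rewrite ?conjC1 ?rmorphN1.
exists (col_mx (W *m F *m (1%:M - s *: (A *m ew^t* *m ex))) (ew - s *: ex)) => u hu.
set u1 := lsubmx u; set a : algC := rsubmx u 0 0.
set z := u1 *m W *m F; set L := hform A z ew; set b := - s * (L + a).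
have hL : z *m A *m ew^t* = L%:M by rewrite [LHS]mx11_scalar.
have -> : u *m col_mx (W *m F *m (1%:M - s *: (A *m ew^t* *m ex))) (ew - s *: ex)
    = z + a *: ew + b *: ex.
  rewrite -[u]hsubmxK mul_row_col -/u1 (mx11_scalar (rsubmx u)) -/a mul_scalar_mx.
  rewrite !mulmxA mulmxBr mulmx1 -scalemxAr !mulmxA -/z hL mul_scalar_mx.
  by apply/rowP => j; rewrite !mxE /b; ring.
have hzz : hquad A z = hquad B (u1 *m W).
  by rewrite /hquad /hform /z trmxC_mul -hB !mulmxA.
have hzx : hform A z ex = 0.
  rewrite /hform; have -> : z *m A *m ex^t* = (u1 *m W) *m (F *m A *m ex^t*).
    by rewrite !mulmxA.
  by rewrite hx mulmx0 mxE.
have hxz : hform A ex z = 0 by rewrite (hformC _ _ hA) hzx conjC0.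
have hwz : hform A ew z = L^* by rewrite (hformC _ _ hA).
have hew : hform A ew ew = 0 by rewrite hform_delta.
have hexx : hform A ex ex = 0 by rewrite hform_delta.
have hewx : hform A ew ex = s by rewrite hform_delta.
have hexw : hform A ex ew = s by rewrite (hformC _ _ hA) hewx.
have hb : b^* = - s * (L^* + a^*).
  by rewrite /b rmorphM rmorphN rmorphD -[in RHS]hsc.
have -> : hquad A (z + a *: ew + b *: ex) = hquad B (u1 *m W) - (a * a^*) *+ 2.
  rewrite /hquad !hformDl !hformDr !hformZl !hformZr -/L hzx hxz hwz hew hexx.
  rewrite hewx hexw hb -/(hquad A z) hzz /b -/(hquad B _).
  by case: hs => ->; ring.
have [u10 | u1n0] := eqVneq u1 0.
  have ha : a != 0.
    apply: contraNneq hu => ha.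
    rewrite -[u]hsubmxK -/u1 u10 (mx11_scalar (rsubmx u)) -/a ha.
    apply/eqP/matrixP => i j; rewrite !mxE.
    by case: splitP => ? ?; rewrite !mxE // ?mulr0n ?mul0rn.
  rewrite u10 mul0mx /hquad /hform !mul0mx mxE sub0r oppr_lt0 pmulrn_lgt0 //.
  by rewrite mul_conjC_gt0.
rewrite -[X in _ < X](addr0 0); apply: ltr_leD; first exact: hW.
by rewrite oppr_le0 mulrn_wge0 // mul_conjC_ge0.
Qed.

Section SignedAdjacency.
Variables (T : finType) (e : rel T) (neg : T -> T -> bool).
Hypothesis sgT : signed_graph e neg.

Lemma sgn_val_conj x y : (sgn_val neg x y)^* = sgn_val neg x y.
Proof. by rewrite /sgn_val; case: neg; rewrite ?conjC1 ?rmorphN1. Qed.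

Lemma sgn_valC x y : sgn_val neg x y = sgn_val neg y x.
Proof. by have [_ [_ nsym]] := sgT; rewrite /sgn_val nsym. Qed.

Lemma trmxC_adj_mx : (adj_mx e neg)^t* = adj_mx e neg.
Proof.
have [esym _] := sgT.
apply/matrixP => i j; rewrite !mxE esym sgn_valC.
by case: e; rewrite ?sgn_val_conj ?conjC0.
Qed.

Lemma trmxC_cycle_adj_mx (c : seq T) : (cycle_adj_mx neg c)^t* = cycle_adj_mx neg c.
Proof.
apply/matrixP => i j; rewrite !mxE (sgn_valC (tnth _ j)) orbC.
by case: (_ || _); rewrite ?sgn_val_conj ?conjC0.
Qed.

Lemma adj_mx_edge x y : e x y -> adj_mx e neg (enum_rank x) (enum_rank y) = sgn_val neg x y.
Proof. by move=> hxy; rewrite mxE !enum_rankK hxy. Qed.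

Lemma adj_mx_diag i : adj_mx e neg i i = 0.
Proof. by have [_ [eirr _]] := sgT; rewrite mxE eirr. Qed.

Definition cycle_sel (c : seq T) : 'M[algC]_(size c, #|T|) :=
  \matrix_(i, j) (enum_val j == tnth (in_tuple c) i)%:R.

Lemma sum_enum_val_eq (t : T) (g : 'I_#|T| -> algC) :
  \sum_p (enum_val p == t)%:R * g p = g (enum_rank t).
Proof.
rewrite (bigD1 (enum_rank t)) //= enum_rankK eqxx mul1r big1 ?addr0 // => p hp.
rewrite (_ : (enum_val p == t) = false) ?mul0r //; apply/negbTE.
by apply: contra hp => /eqP <-; rewrite enum_valK.
Qed.

Lemma cycle_sel_mulmx (c : seq T) m (M : 'M[algC]_(#|T|, m)) :
  cycle_sel c *m M = \matrix_(i, q) M (enum_rank (tnth (in_tuple c) i)) q.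
Proof.
apply/matrixP => i q; rewrite !mxE -(sum_enum_val_eq _ (fun p => M p q)).
by apply: eq_bigr => p _; rewrite mxE.
Qed.

Lemma mulmx_cycle_selC (c : seq T) m (M : 'M[algC]_(m, #|T|)) :
  M *m (cycle_sel c)^t* = \matrix_(q, j) M q (enum_rank (tnth (in_tuple c) j)).
Proof.
apply/matrixP => q j; rewrite !mxE -(sum_enum_val_eq _ (M q)).
by apply: eq_bigr => p _; rewrite !mxE conjC_nat mulrC.
Qed.

Lemma shortest_cycle_compress (c : seq T) : is_cycle e c ->
  (forall c', is_cycle e c' -> (size c <= size c')%N) ->
  cycle_sel c *m adj_mx e neg *m (cycle_sel c)^t* = cycle_adj_mx neg c.
Proof.
have [esym [eirr _]] := sgT => hc hmin.
apply/matrixP => i j; rewrite cycle_sel_mulmx mulmx_cycle_selC !mxE !enum_rankK.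
by rewrite (shortest_cycle_adjE esym eirr hc hmin).
Qed.

Lemma cycle_sel_adj_far (c : seq T) x : (forall y, y \in c -> ~~ e x y) ->
  cycle_sel c *m adj_mx e neg *m (delta_mx 0 (enum_rank x) : 'rV[algC]_#|T|)^t* = 0.
Proof.
have [esym _] := sgT => hfar.
apply/matrixP => i j; rewrite cycle_sel_mulmx mxE (bigD1 (enum_rank x)) //= big1.
  by rewrite !mxE !enum_rankK esym (negbTE (hfar _ (mem_tnth i (in_tuple c)))) mul0r addr0.
by move=> q hq; rewrite !mxE (negbTE hq) andbF conjC0 mulr0.
Qed.

End SignedAdjacency.

Theorem lemma2p7 (T : finType) (e : rel T) (neg : T -> T -> bool) (c : seq T) :
  signed_graph e neg ->
  is_cycle e c ->
  (forall c' : seq T, is_cycle e c' -> (size c <= size c')%N) ->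
  n_neg (adj_mx e neg) = n_neg (cycle_adj_mx neg c) ->
  forall r : nat, (2 <= r)%N -> forall v : T, ~ in_N e r c v.
Proof.
move=> sgT hc hmin hneg r hr v hv.
have [esym _] := sgT.
have [[w hvw] hfar] := in_N_far_edge hr hv.
have hs : sgn_val neg w v = 1 \/ sgn_val neg w v = -1.
  by rewrite /sgn_val; case: (neg w v); [right | left].
have [W hW] := n_neg_negdef (hermsymmx_trmxC (trmxC_cycle_adj_mx sgT c)).
have [W' hW'] := negdef_extend (trmxC_adj_mx sgT) (shortest_cycle_compress sgT hc hmin)
  (cycle_sel_adj_far sgT hfar) (adj_mx_diag sgT _) (adj_mx_diag sgT _)
  (adj_mx_edge neg (etrans (esym w v) hvw)) hs hW.
have := n_neg_ge_negdef (hermsymmx_trmxC (trmxC_adj_mx sgT)) hW'.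
by rewrite hneg addn1 ltnn.
Qed.
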